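(* Fix a trade-off function $f$ and $\alpha\in(0,1)$. Let $D_{n+1}=((X_i,Y_i))_{i=1}^{n+1}$ consist of i.i.d. data points from a distribution $P$ on $\mathcal X\times\mathcal Y$ and let $D_n=((X_i,Y_i))_{i=1}^n$. Let $M$ be any $f$-DP mechanism (with respect to add/remove-one adjacency) and $C(\cdot,\cdot)$ any prediction-set map, sending a mechanism output and a point $x\in\mathcal X$ to a measurable subset of $\mathcal Y$. If $\mathbb P\big(Y_{n+1}\in C(M(D_{n+1}),X_{n+1})\big)\ge 1-\alpha$, then $\mathbb P\big(Y_{n+1}\in C(M(D_n),X_{n+1})\big)\ge f(\alpha)$. Probabilities are over the data and the randomness of $M$ (which is independent of the data).
   Context: Trade-off function: for distributions $P,Q$, $T(P,Q)(\alpha)=\inf_\phi\{1-\mathbb E_Q[\phi]:\mathbb E_P[\phi]\le\alpha\}$ over measurable tests $\phi$ with values in $[0,1]$. A function $f:[0,1]\to[0,1]$ is a trade-off function if it is convex, continuous, non-increasing and $f(\alpha)\le 1-\alpha$. A mechanism $M$ is $f$-DP if $T(M(D),M(D'))\ge f$ pointwise for all datasets $D,D'$ differing by the addition or removal of one entry. *)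

From HB Require Import structures.
From mathcomp Require Import all_boot all_order all_algebra.
From mathcomp Require Import all_classical all_reals all_analysis.
From mathcomp Require Import measurable_realfun.
Set Implicit Arguments. Unset Strict Implicit. Unset Printing Implicit Defensive.
Import Order.TTheory GRing.Theory Num.Theory numFieldNormedType.Exports.
Local Open Scope classical_set_scope.
Local Open Scope ring_scope.

(* A function f : [0,1] -> [0,1] (given as R -> R, only its values on [0,1]
   matter) is a trade-off function if it is convex, continuous,
   non-increasing and f(a) <= 1 - a. *)
Definition is_tradeoff_fun (R : realType) (f : R -> R) : Prop :=
  [/\ (forall a, 0 <= a <= 1 -> 0 <= f a <= 1),
      (forall a b t, 0 <= a <= 1 -> 0 <= b <= 1 -> 0 <= t <= 1 ->
          f (t * a + (1 - t) * b) <= t * f a + (1 - t) * f b),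
      {within `[0, 1]%classic, continuous f},
      (forall a b, 0 <= a <= 1 -> 0 <= b <= 1 -> a <= b -> f b <= f a) &
      (forall a, 0 <= a <= 1 -> f a <= 1 - a)].

Definition is_test d (O : measurableType d) (R : realType) (phi : O -> R) : Prop :=
  measurable_fun setT phi /\ (forall o, 0 <= phi o <= 1).

Definition tradeoff d (O : measurableType d) (R : realType)
    (P Q : probability O R) (a : R) : \bar R :=
  ereal_inf [set (1 - \int[Q]_o (phi o)%:E)%E
            | phi in [set phi : O -> R | is_test phi /\
                      (\int[P]_o (phi o)%:E <= a%:E)%E]].

Definition remove_one (T : Type) (D D' : seq T) : Prop :=
  exists2 i, (i < size D)%N & D' = take i D ++ drop i.+1 D.

Definition neighbors (T : Type) (D D' : seq T) : Prop :=
  remove_one D D' \/ remove_one D' D.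

Definition fDP (T : Type) d (O : measurableType d) (R : realType)
    (f : R -> R) (M : seq T -> probability O R) : Prop :=
  forall D D', neighbors D D' ->
    forall a, 0 <= a <= 1 -> ((f a)%:E <= tradeoff (M D) (M D') a)%E.

(* Apply the f-DP guarantee, for each fixed data set, to the neighbouring pair
   (D_(n+1), D_n) and the test "Y_(n+1) is not covered": if the covered mass
   under M(D_(n+1)) is p, the covered mass under M(D_n) is at least f(1 - p).
   A convex non-increasing f has a supporting line of non-positive slope at
   alpha, so integrating this pointwise bound (Jensen) and using that the
   expected miscoverage E[1 - p] is at most alpha yields f(alpha). *)
From HB Require Import structures.
From mathcomp Require Import all_boot all_order all_algebra.
From mathcomp Require Import all_classical all_reals all_analysis.
From mathcomp Require Import measurable_realfun.
From mathcomp Require Import ring lra.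
Set Implicit Arguments. Unset Strict Implicit. Unset Printing Implicit Defensive.
Import Order.TTheory GRing.Theory Num.Theory numFieldNormedType.Exports.
Local Open Scope classical_set_scope.
Local Open Scope ring_scope.

Section convex_supporting_line.
Variables (R : realType) (f : R -> R).
Hypothesis f_convex : forall a b t, 0 <= a <= 1 -> 0 <= b <= 1 -> 0 <= t <= 1 ->
  f (t * a + (1 - t) * b) <= t * f a + (1 - t) * f b.

Lemma convex_slope_le t a u : 0 <= t -> t < a -> a < u -> u <= 1 ->
  (u - a) * (f a - f t) <= (a - t) * (f u - f a).
Proof.
move=> t0 ta au u1.
pose l := (u - a) / (u - t).
have ut_gt0 : 0 < u - t by lra.
have a_conv : l * t + (1 - l) * u = a by rewrite /l; field; lra.
have l01 : 0 <= l <= 1.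
  by rewrite divr_ge0 ?ler_pdivrMr //=; lra.
have fa_le : f a <= l * f t + (1 - l) * f u.
  by rewrite -{1}a_conv; apply: f_convex => //; lra.
have scaled : (u - t) * (l * f t + (1 - l) * f u) = (u - a) * f t + (a - t) * f u.
  by rewrite /l; field; lra.
have := ler_wpM2l (ltW ut_gt0) fa_le; rewrite scaled; nra.
Qed.

Hypothesis f_nonincreasing : forall a b, 0 <= a <= 1 -> 0 <= b <= 1 ->
  a <= b -> f b <= f a.

(* The slope is the supremum of the left difference quotients at a. *)
Lemma nonincreasing_convex_supporting_line a : 0 < a < 1 ->
  exists2 s, s <= 0 & forall t, 0 <= t <= 1 -> f a + s * (t - a) <= f t.
Proof.
move=> /andP[a0 a1].
pose S := [set (f a - f t) / (a - t) | t in [set t | 0 <= t < a]].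
have S_ub u : a < u <= 1 -> ubound S ((f u - f a) / (u - a)).
  move=> /andP[au u1] _ [t /andP[t0 ta] <-].
  have := convex_slope_le t0 ta au u1.
  rewrite ler_pdivrMr ?subr_gt0 // mulrAC ler_pdivlMr ?subr_gt0 //; nra.
have S_le0 : ubound S 0.
  move=> _ [t /andP[t0 ta] <-].
  rewrite ler_pdivrMr ?subr_gt0 // mul0r subr_le0.
  by apply: f_nonincreasing; lra.
have S_sup : has_sup S.
  split; last by exists 0.
  by exists ((f a - f 0) / (a - 0)); exists 0; rewrite //= lexx.
exists (sup S); first exact: ge_sup S_sup.1 S_le0.
move=> t /andP[t0 t1]; have [ta|ta|->] := ltgtP t a.
- have : (f a - f t) / (a - t) <= sup S.
    by apply: sup_upper_bound => //; exists t; rewrite //= t0.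
  rewrite ler_pdivrMr ?subr_gt0 //; nra.
- have : sup S <= (f t - f a) / (t - a) by apply: ge_sup S_sup.1 _; apply: S_ub; lra.
  rewrite ler_pdivlMr ?subr_gt0 //; nra.
- by rewrite subrr mulr0 addr0.
Qed.

End convex_supporting_line.

Lemma probability_fine_itv d (T : measurableType d) (R : realType)
    (P : probability T R) (A : set T) :
  measurable A -> 0 <= fine (P A) <= 1.
Proof.
move=> mA; rewrite -!lee_fin fineK ?fin_num_measure //.
by rewrite measure_ge0 probability_le1.
Qed.

Lemma tradeoff_le_measure d (O : measurableType d) (R : realType)
    (P Q : probability O R) (S : set O) :
  measurable S -> (tradeoff P Q (1 - fine (P S)) <= Q S)%E.
Proof.
move=> mS; have mSC := measurableC mS.
apply: ereal_inf_lbound; exists (\1_(~` S) : O -> R).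
  split; first split.
  - exact: measurable_indic.
  - by move=> o; rewrite indicE; case: (_ \in _); rewrite ?lexx ?ler01.
  - rewrite integral_indic // setIT.
    change (P (~` S) <= (1 - fine (P S))%:E)%E; rewrite probability_setC //.
    by rewrite EFinB fineK // fin_num_measure.
rewrite integral_indic // setIT.
change ((1 - Q (~` S))%E = Q S); rewrite probability_setC //.
by rewrite oppeB ?fin_num_measure // addeA subee // add0e.
Qed.

Lemma neighbors_rcons (T : Type) (D : seq T) (z : T) : neighbors (rcons D z) D.
Proof.
left; exists (size D); first by rewrite size_rcons.
by rewrite -cats1 take_size_cat // drop_oversize ?cats0 // size_cat addn1.
Qed.

Lemma fDP_rcons_le (T : Type) d (O : measurableType d) (R : realType)
    (f : R -> R) (M : seq T -> probability O R) (D : seq T) (z : T) (S : set O) :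
  fDP f M -> measurable S ->
  ((f (1 - fine (M (rcons D z) S)))%:E <= M D S)%E.
Proof.
move=> fdp mS; apply: le_trans (tradeoff_le_measure _ _ mS).
apply: fdp; first exact: neighbors_rcons.
by have := probability_fine_itv (M (rcons D z)) mS; lra.
Qed.

Lemma measurable_ysection' d d' (O : measurableType d)
    (T : measurableType d') (E : set (O * T)) (y : T) :
  measurable E -> measurable [set o | E (o, y)].
Proof.
move=> mE; have := measurable_ysection y mE; congr measurable.
by apply/seteqP; split=> o; rewrite /ysection /= inE.
Qed.

Section probability_family.
Context (dW dO dT : measure_display) (W : measurableType dW)
  (O : measurableType dO) (T : measurableType dT) (R : realType).
Variable k : W -> probability O R.
Hypothesis measurable_k : forall A : set O, measurable A ->
  measurable_fun setT (fun w => k w A).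

Let kmeasure : W -> {measure set O -> \bar R} := k.
HB.instance Definition _ := isKernel.Build _ _ W O R kmeasure measurable_k.
HB.instance Definition _ :=
  Kernel_isProbability.Build _ _ W O R kmeasure (fun w => probability_setT (k w)).

Lemma measurable_fun_probability_section (g : W -> T) (E : set (O * T)) :
  measurable_fun setT g -> measurable E ->
  measurable_fun setT (fun w => k w [set o | E (o, g w)]).
Proof.
move=> mg mE.
pose A := [set p : W * O | E (p.2, g p.1)].
have mA : measurable A.
  have mpair : measurable_fun setT (fun p : W * O => (p.2, g p.1)).
    apply: measurable_fun_pair; first exact: measurable_snd.
    exact: measurableT_comp mg measurable_fst.
  by have := mpair measurableT _ mE; rewrite setTI.
have := measurable_fun_xsection_finite_kernel kmeasure (mem_set mA).
congr measurable_fun; apply/funext => w; congr (k w _).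
by apply/seteqP; split=> o; rewrite /xsection /= inE.
Qed.

End probability_family.

Section integral_affine.
Context d (W : measurableType d) (R : realType) (Pr : probability W R).
Local Open Scope ereal_scope.

Lemma integrable_bounded01 (p : W -> \bar R) : measurable_fun setT p ->
  (forall w, 0 <= p w <= 1) -> Pr.-integrable setT p.
Proof.
move=> mp p01; apply: (le_integrable measurableT mp (g := EFin \o cst 1%R)).
- by move=> w _; have /andP[p0 p1] := p01 w; rewrite /= gee0_abs // normr1.
- exact: finite_measure_integrable_cst.
Qed.

Lemma le_integral_affine (p q : W -> \bar R) (c k : R) :
  measurable_fun setT p -> measurable_fun setT q ->
  (forall w, 0 <= p w <= 1) -> (forall w, 0 <= q w <= 1) ->
  (forall w, c%:E + k%:E * p w <= q w) ->
  c%:E + k%:E * \int[Pr]_w p w <= \int[Pr]_w q w.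
Proof.
move=> mp mq p01 q01 pq.
have ip := integrable_bounded01 mp p01.
have ic : Pr.-integrable setT (EFin \o cst c).
  exact: finite_measure_integrable_cst.
have ikp : Pr.-integrable setT (fun w => k%:E * p w) by exact: integrableZl.
rewrite -[c%:E](mule1 c%:E) -(probability_setT Pr) -integral_cst //.
rewrite -integralZl // -integralD //.
apply: le_integral => //; first exact: integrableD.
exact: integrable_bounded01.
Qed.

End integral_affine.

Theorem theorem2 (R : realType) (f : R -> R) (alpha : R)
  (dX dY dO dW : measure_display)
  (X : measurableType dX) (Y : measurableType dY)
  (O : measurableType dO) (W : measurableType dW)
  (Pr : probability W R) (Pdata : probability (X * Y)%type R)
  (n : nat) (Z : 'I_n.+1 -> W -> (X * Y)%type)
  (M : seq (X * Y)%type -> probability O R)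
  (C : O -> X -> set Y) :
  is_tradeoff_fun f ->
  0 < alpha < 1 ->
  (* the data points are measurable random variables ... *)
  (forall i, measurable_fun setT (Z i)) ->
  (* ... identically distributed with law Pdata ... *)
  (forall i (A : set (X * Y)%type), measurable A ->
     Pr (Z i @^-1` A) = Pdata A) ->
  (* ... and mutually independent *)
  (forall A : 'I_n.+1 -> set (X * Y)%type, (forall i, measurable (A i)) ->
     Pr (\bigcap_i (Z i @^-1` A i)) = (\prod_i Pr (Z i @^-1` A i))%E) ->
  fDP f M ->
  (* regularity: C is a (jointly measurable) prediction-set map *)
  measurable [set p : O * (X * Y) | C p.1 p.2.1 p.2.2] ->
  (* regularity: M is a Markov kernel when fed the random datasets *)
  (forall A : set O, measurable A ->
     measurable_fun setT (fun w : W => (M [seq Z i w | i <- enum 'I_n.+1] A : \bar R))) ->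
  (forall A : set O, measurable A ->
     measurable_fun setT
       (fun w : W => (M [seq Z (widen_ord (leqnSn n) i) w | i <- enum 'I_n] A : \bar R))) ->
  (\int[Pr]_w M [seq Z i w | i <- enum 'I_n.+1]
        [set o | C o (Z ord_max w).1 (Z ord_max w).2] >= (1 - alpha)%:E)%E ->
  (\int[Pr]_w M [seq Z (widen_ord (leqnSn n) i) w | i <- enum 'I_n]
        [set o | C o (Z ord_max w).1 (Z ord_max w).2] >= (f alpha)%:E)%E.
Proof.
move=> [_ f_convex _ f_noninc _] alpha01 mZ _ _ fdp mC mM1 mM0 coverage.
set E := [set p : O * (X * Y) | C p.1 p.2.1 p.2.2] in mC.
set S := fun w => [set o | E (o, Z ord_max w)].
set D0 := fun w => [seq Z (widen_ord (leqnSn n) i) w | i <- enum 'I_n].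
have D1E w : [seq Z i w | i <- enum 'I_n.+1] = rcons (D0 w) (Z ord_max w).
  by rewrite enum_ordSr map_rcons -map_comp.
pose p w := M [seq Z i w | i <- enum 'I_n.+1] (S w).
pose q w := M (D0 w) (S w).
have mS w : measurable (S w) by exact: measurable_ysection'.
have mp : measurable_fun setT p.
  exact: (measurable_fun_probability_section mM1 (mZ ord_max) mC).
have mq : measurable_fun setT q.
  exact: (measurable_fun_probability_section mM0 (mZ ord_max) mC).
have p01 w : (0 <= p w <= 1)%E by rewrite measure_ge0 probability_le1.
have q01 w : (0 <= q w <= 1)%E by rewrite measure_ge0 probability_le1.
have [s s_le0 line] := nonincreasing_convex_supporting_line f_convex f_noninc alpha01.
(* [c + (- s) * p] is the supporting line at alpha evaluated at [1 - p]. *)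
pose c := f alpha + s * (1 - alpha).
have line_le_q w : (c%:E + (- s)%:E * p w <= q w)%E.
  apply: (le_trans _ (fDP_rcons_le (D0 w) (Z ord_max w) fdp (mS w))).
  rewrite -D1E -[p w in leLHS](fineK (fin_num_measure _ _ (mS w))).
  have pw01 := probability_fine_itv (M [seq Z i w | i <- enum 'I_n.+1]) (mS w).
  have := line (1 - fine (p w)) ltac:(lra).
  by rewrite -EFinM -EFinD lee_fin /c; lra.
apply: (le_trans _ (le_integral_affine Pr mp mq p01 q01 line_le_q)).
apply: (@le_trans _ _ (c%:E + (- s)%:E * (1 - alpha)%:E)%E).
  by rewrite -EFinM -EFinD lee_fin /c; lra.
by rewrite leeD2l // lee_wpmul2l // lee_fin oppr_ge0.
Qed.
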